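(* Let $\mathcal Q_0=\mathbb Q\cap(0,1)$ and consider the real vector space of finitely supported real functions on $\mathcal Q_0$ with unit vectors $e_q$, $q\in\mathcal Q_0$. Define linear operators $D_2,D_3$ on it by $D_2e_q=e_{q/2}+e_{(q+1)/2}$ and $D_3e_q=e_{q/3}+e_{(q+1)/3}+e_{(q+2)/3}$. Then for all $l,m\in\mathbb N$ the vector $D_2^lD_3^me_{1/6}$ is a sum of $2^l3^m$ pairwise different unit vectors $e_q$, and the supports of $D_2^lD_3^me_{1/6}$ and $D_2^{l_1}D_3^{m_1}e_{1/6}$ are disjoint whenever $(l,m)\ne(l_1,m_1)$. *)

From HB Require Import structures.
From mathcomp Require Import all_boot all_order all_algebra.
From mathcomp Require Import reals.
From mathcomp Require Import finmap.
From mathcomp.multinomials Require Import monalg.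
Set Implicit Arguments. Unset Strict Implicit. Unset Printing Implicit Defensive.
Import Order.TTheory GRing.Theory Num.Theory.
Local Open Scope ring_scope.

Definition Q0 : Type := {q : rat | (0 < q) && (q < 1)}.

Lemma Q0_div_proof (k : nat) (n : nat) (q : rat) :
  (0 < q) && (q < 1) -> (k < n)%N ->
  (0 < (q + k%:R) / n%:R) && ((q + k%:R) / n%:R < 1).
Proof.
move=> /andP[q0 q1] kn.
have n0 : (0 : rat) < n%:R by rewrite ltr0n (leq_ltn_trans (leq0n k) kn).
apply/andP; split.
  by rewrite divr_gt0 // ltr_wpDr // ler0n.
rewrite ltr_pdivrMr // mul1r.
have : (k.+1%:R : rat) <= n%:R by rewrite ler_nat.
rewrite -addn1 natrD => H.
apply: (lt_le_trans _ H); by rewrite addrC ltrD2l.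
Qed.

Definition Q0div (n k : nat) (kn : (k < n)%N) (q : Q0) : Q0 :=
  exist _ ((val q + k%:R) / n%:R) (Q0_div_proof (valP q) kn).

Definition half0 := @Q0div 2 0 isT.
Definition half1 := @Q0div 2 1 isT.
Definition third0 := @Q0div 3 0 isT.
Definition third1 := @Q0div 3 1 isT.
Definition third2 := @Q0div 3 2 isT.

Definition sixth : Q0 := exist _ (1 / 6%:R) isT.

Definition V (R : realType) := {malg R[Q0]}.

Definition e (R : realType) (q : Q0) : V R := << q >>.

(* D2, D3: the linear extensions of their values on the unit vectors *)
Definition D2 (R : realType) (v : V R) : V R :=
  \sum_(q <- msupp v) v@_q *: (e R (half0 q) + e R (half1 q)).
Definition D3 (R : realType) (v : V R) : V R :=
  \sum_(q <- msupp v) v@_q *: (e R (third0 q) + e R (third1 q) + e R (third2 q)).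

Definition Dlm (R : realType) (l m : nat) : V R :=
  iter l (@D2 R) (iter m (@D3 R) (e R sixth)).

From HB Require Import structures.
From mathcomp Require Import all_boot all_order all_algebra.
From mathcomp Require Import reals.
From mathcomp Require Import finmap.
From mathcomp.multinomials Require Import monalg.
From mathcomp Require Import zify ring lra.
Import Order.TTheory GRing.Theory Num.Theory.
Local Open Scope ring_scope.

(* Both operators are linear extensions of maps on unit vectors: D_N sends
   e_q to the sum of the e_{(q+k)/N}, k < N.  Applied to a sum of pairwise
   different unit vectors indexed by s, D_N therefore yields the sum indexed by
   the sequence [step N s] of all (q+k)/N (q in s, k < N), and this sequence
   is again duplicate-free because q |-> (q+k)/N are injective with pairwise
   disjoint images ((q+k)/N lies in (k/N, (k+1)/N)).  Iterating from
   e_{1/6} gives D_2^l D_3^m e_{1/6} = sum of e_q over a duplicate-free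
   sequence [orbit l m] of length 2^l 3^m.
   For disjointness, every q in [orbit l m] can be written q = n/(2^(l+1)3^(m+1))
   with n = 1 mod 6: this holds for 1/6 and (q+k)/N = (n + k A)/(N A) keeps
   n mod 6 as soon as 6 divides A.  Since such an n is prime to 2 and 3, the
   2- and 3-adic valuations of the denominator, hence (l, m), are determined
   by q. *)

(* q |-> (q+k)/n as a total function on Q_0; it agrees with [Q0div] for k < n *)
Definition qdiv (n k : nat) (q : Q0) : Q0 := insubd q ((val q + k%:R) / n%:R).

Lemma qdiv_val (n k : nat) (q : Q0) :
  (k < n)%N -> val (qdiv n k q) = (val q + k%:R) / n%:R.
Proof. by move=> kn; rewrite /qdiv insubdK //; exact: Q0_div_proof (valP q) kn. Qed.

Lemma qdivE (n k : nat) (kn : (k < n)%N) (q : Q0) : qdiv n k q = Q0div kn q.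
Proof. by apply: val_inj; rewrite qdiv_val. Qed.

Lemma qdiv_inj (n k k' : nat) (q q' : Q0) :
  (k < n)%N -> (k' < n)%N -> qdiv n k q = qdiv n k' q' -> k = k' /\ q = q'.
Proof.
move=> kn k'n /(congr1 val); rewrite !qdiv_val //.
have n_neq0 : (n%:R : rat) != 0.
  by rewrite pnatr_eq0 -lt0n (leq_ltn_trans (leq0n k) kn).
move=> /(congr1 ( *%R^~ n%:R)); rewrite !divfK // => Eqk.
have /andP[q_gt0 q_lt1] := valP q; have /andP[q'_gt0 q'_lt1] := valP q'.
have kk' : k = k'.
  have apart (i j : nat) : (i < j)%N -> (i%:R : rat) + 1 <= j%:R.
    by move=> ij; rewrite natr1 ler_nat.
  by case: (ltngtP k k') => // [/apart | /apart] ?; exfalso; lra.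
by subst k'; split=> //; apply: val_inj; exact: addIr Eqk.
Qed.

Definition step (n : nat) (s : seq Q0) : seq Q0 :=
  [seq qdiv n k q | q <- s, k <- iota 0 n].

Lemma step_uniq (n : nat) (s : seq Q0) : uniq s -> uniq (step n s).
Proof.
move=> s_uniq; apply: allpairs_uniq => //; first exact: iota_uniq.
move=> [q k] [q' k'] /allpairsP[[a b] /= [_ b_lt [-> ->]]].
move=> /allpairsP[[a' b'] /= [_ b'_lt [-> ->]]] /=.
rewrite !mem_iota /= !add0n in b_lt b'_lt.
by move=> /qdiv_inj => /(_ b_lt b'_lt) [-> ->].
Qed.

Lemma size_step (n : nat) (s : seq Q0) : size (step n s) = (size s * n)%N.
Proof. by rewrite size_allpairs size_iota. Qed.

Section UnitSums.
Variable R : realType.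

Definition esum (s : seq Q0) : V R := \sum_(q <- s) e R q.

Lemma esum_coef (s : seq Q0) (x : Q0) : uniq s -> (esum s)@_x = (x \in s)%:R.
Proof.
move=> s_uniq; rewrite -count_uniq_mem //.
elim: s {s_uniq} => [|q s IH]; first by rewrite /esum big_nil mcoeff0.
by rewrite /esum big_cons mcoeffD IH /e mcoeffU /= natrD.
Qed.

Lemma msupp_esum (s : seq Q0) : uniq s -> msupp (esum s) =i s.
Proof.
move=> s_uniq x; rewrite -mcoeff_neq0 esum_coef //.
by case: (x \in s); rewrite ?oner_eq0 ?eqxx.
Qed.

Lemma linext_esum (s : seq Q0) (G : Q0 -> V R) : uniq s ->
  \sum_(q <- msupp (esum s)) (esum s)@_q *: G q = \sum_(q <- s) G q.
Proof.
move=> s_uniq; rewrite (perm_big s); last first.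
  by apply: uniq_perm => //; [exact: fset_uniq | exact: msupp_esum].
rewrite big_seq [RHS]big_seq; apply: eq_bigr => q qs.
by rewrite esum_coef // qs scale1r.
Qed.

Lemma esum_step (n : nat) (s : seq Q0) : uniq s ->
  \sum_(q <- msupp (esum s)) (esum s)@_q *: \sum_(k <- iota 0 n) e R (qdiv n k q)
  = esum (step n s).
Proof. by move=> s_uniq; rewrite linext_esum // /esum big_allpairs_dep. Qed.

Lemma D2_esum (s : seq Q0) : uniq s -> D2 (esum s) = esum (step 2 s).
Proof.
move=> s_uniq; rewrite -(esum_step 2 s s_uniq) /D2; apply: eq_bigr => q _.
by rewrite /half0 /half1 -!qdivE big_cons big_seq1.
Qed.

Lemma D3_esum (s : seq Q0) : uniq s -> D3 (esum s) = esum (step 3 s).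
Proof.
move=> s_uniq; rewrite -(esum_step 3 s s_uniq) /D3; apply: eq_bigr => q _.
by rewrite /third0 /third1 /third2 -!qdivE 2!big_cons big_seq1 addrA.
Qed.

End UnitSums.

Definition orbit (l m : nat) : seq Q0 :=
  iter l (step 2) (iter m (step 3) [:: sixth]).

Lemma orbit_uniq (l m : nat) : uniq (orbit l m).
Proof.
rewrite /orbit; elim: l => [|l IH] /=; last exact: step_uniq.
by elim: m => [|m IH] //=; exact: step_uniq.
Qed.

Lemma size_orbit (l m : nat) : size (orbit l m) = (2 ^ l * 3 ^ m)%N.
Proof.
rewrite /orbit; elim: l => [|l IH] /=; last by rewrite size_step IH expnS; ring.
by rewrite mul1n; elim: m => [|m IH] //=; rewrite size_step IH expnS; ring.
Qed.

Lemma DlmE (R : realType) (l m : nat) : Dlm R l m = esum R (orbit l m).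
Proof.
rewrite /Dlm /orbit; elim: l => [|l IH] /=; last first.
  by rewrite IH D2_esum //; exact: (orbit_uniq l m).
elim: m => [|m IH] /=; first by rewrite /esum big_seq1.
by rewrite IH D3_esum //; exact: (orbit_uniq 0 m).
Qed.

Definition sixth_form (A : nat) (q : Q0) : Prop :=
  exists n : nat, (n %% 6 = 1)%N /\ val q * A%:R = n%:R.

(* (q+k)/N = (n + kA)/(NA), and n + kA = n mod 6 when 6 divides A *)
Lemma sixth_form_qdiv (N k A : nat) (q : Q0) : (k < N)%N -> (6 %| A)%N ->
  sixth_form A q -> sixth_form (N * A) (qdiv N k q).
Proof.
move=> kN six_dvdA [n [n_mod qA]]; exists (n + k * A)%N; split.
  by rewrite -modnDm -modnMml -modnMmr (eqP six_dvdA) muln0 mod0n addn0 n_mod.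
have N_neq0 : (N%:R : rat) != 0.
  by rewrite pnatr_eq0 -lt0n (leq_ltn_trans (leq0n k) kN).
by rewrite qdiv_val // natrM natrD natrM -qA; field.
Qed.

Lemma step_sixth_form (N A : nat) (s : seq Q0) : (6 %| A)%N ->
  (forall x, x \in s -> sixth_form A x) ->
  forall q, q \in step N s -> sixth_form (N * A) q.
Proof.
move=> six_dvdA s_form q /allpairsP[[x k] /= [xs k_lt ->]].
by rewrite mem_iota add0n in k_lt; exact: sixth_form_qdiv six_dvdA (s_form x xs).
Qed.

Lemma logn_one_mod6 (p n : nat) :
  prime p -> (p %| 6)%N -> (n %% 6 = 1)%N -> logn p n = 0%N.
Proof.
move=> p_pr p_dvd6 n_mod; apply: logn_coprime; rewrite prime_coprime //.
apply/negP => p_dvdn; have : (p %| 1)%N.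
  by move: p_dvdn; rewrite (divn_eq n 6) n_mod dvdn_addr // dvdn_mull.
by rewrite dvdn1 => /eqP p1; rewrite p1 in p_pr.
Qed.

Lemma sixth_form_logn (p A B : nat) (q : Q0) : prime p -> (p %| 6)%N ->
  (0 < A)%N -> (0 < B)%N -> sixth_form A q -> sixth_form B q ->
  logn p A = logn p B.
Proof.
move=> p_pr p_dvd6 A_gt0 B_gt0 [n [n_mod qA]] [n' [n'_mod qB]].
have cross : (n * B = n' * A)%N.
  by apply/eqP; rewrite -(eqr_nat rat) !natrM -qA -qB mulrAC.
have n_gt0 : (0 < n)%N by lia.
have n'_gt0 : (0 < n')%N by lia.
move/(congr1 (logn p)): cross.
rewrite !lognM // (logn_one_mod6 p n p_pr p_dvd6 n_mod).
by rewrite (logn_one_mod6 p n' p_pr p_dvd6 n'_mod) !add0n => ->.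
Qed.

Definition orbit_denom (l m : nat) : nat := (2 ^ l.+1 * 3 ^ m.+1)%N.

Lemma orbit_denom_gt0 (l m : nat) : (0 < orbit_denom l m)%N.
Proof. by rewrite muln_gt0 !expn_gt0. Qed.

Lemma six_dvd_orbit_denom (l m : nat) : (6 %| orbit_denom l m)%N.
Proof. by rewrite (@dvdn_mul 2 3) // dvdn_exp. Qed.

(* the invariant along [orbit]: 1/6 = 1/(2*3), and each step multiplies the
   denominator by 2 or by 3 *)
Lemma orbit_sixth_form (l m : nat) (q : Q0) :
  q \in orbit l m -> sixth_form (orbit_denom l m) q.
Proof.
rewrite /orbit; elim: l q => [|l IHl] q /=; last first.
  have -> : orbit_denom l.+1 m = (2 * orbit_denom l m)%N.
    by rewrite /orbit_denom expnS mulnA.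
  exact: step_sixth_form (six_dvd_orbit_denom l m) IHl q.
elim: m q => [|m IHm] q /=; first by rewrite inE => /eqP ->; exists 1%N.
have -> : orbit_denom 0 m.+1 = (3 * orbit_denom 0 m)%N.
  by rewrite /orbit_denom [(3 ^ m.+2)%N]expnS mulnCA.
exact: step_sixth_form (six_dvd_orbit_denom 0 m) IHm q.
Qed.

Lemma orbit_disjoint (l m l1 m1 : nat) (q : Q0) :
  q \in orbit l m -> q \in orbit l1 m1 -> l = l1 /\ m = m1.
Proof.
move=> /orbit_sixth_form qlm /orbit_sixth_form ql1m1.
have val_eq p : prime p -> (p %| 6)%N ->
    logn p (orbit_denom l m) = logn p (orbit_denom l1 m1).
  by move=> p_pr p6; apply: sixth_form_logn qlm ql1m1; rewrite ?orbit_denom_gt0.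
have := val_eq 2 isT isT; have := val_eq 3 isT isT.
rewrite /orbit_denom !lognM ?expn_gt0 // !lognX !logn_prime //=.
lia.
Qed.

Theorem lemma3p2 (R : realType) (l m : nat) :
  (exists s : seq Q0,
      [/\ uniq s, size s = (2 ^ l * 3 ^ m)%N & Dlm R l m = \sum_(q <- s) e R q])
  /\ (forall l1 m1 : nat, (l, m) <> (l1, m1) ->
        forall q : Q0, (Dlm R l m)@_q != 0 -> (Dlm R l1 m1)@_q = 0).
Proof.
split; first by exists (orbit l m); rewrite orbit_uniq size_orbit DlmE.
move=> l1 m1 lm_neq q; rewrite !DlmE !esum_coef ?orbit_uniq //.
have [q_in1|//] := boolP (q \in orbit l1 m1).
have [q_in|] := boolP (q \in orbit l m); last by rewrite eqxx.
have [l_eq m_eq] := orbit_disjoint _ _ _ _ _ q_in q_in1.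
by case: lm_neq; rewrite l_eq m_eq.
Qed.
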